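(* Let $(X,d)$ be a Hadamard space, $\mathbf a$ a mask with associated barycentric scheme $S$, and $x\in\ell^\infty(\mathbb Z^s,X)$. Then for all $n\in\mathbb N_0$, $i\in\mathbb Z^s$ and $z\in X$, $$d\big((S^nx)_i,z\big)\le\sum_{k\in\mathbb Z^s}a^{(n)}_{i-2^nk}\,d(x_k,z),$$ and consequently for all $i,j\in\mathbb Z^s$, $d\big((S^nx)_i,(S^nx)_j\big)\le\sum_{k,\ell\in\mathbb Z^s}a^{(n)}_{i-2^nk}a^{(n)}_{j-2^n\ell}\,d(x_k,x_\ell)$.
   Context: Hadamard space: complete metric space $(X,d)$ such that for any $x_0,x_1\in X$ there is $y$ with $d(z,y)^2\le\frac12d(z,x_0)^2+\frac12d(z,x_1)^2-\frac14d(x_0,x_1)^2$ for all $z$. Mask: finitely supported nonnegative $(a_i)_{i\in\mathbb Z^s}$ with $\sum_j a_{i-2j}=1$ for all $i$. Barycentric scheme: $Sx_i=\operatorname{argmin}_{y\in X}\sum_j a_{i-2j}d^2(x_j,y)$. The sequences $a^{(n)}$ are defined by $a^{(0)}_i=\delta_{i,0}$, $a^{(n+1)}_i=\sum_ja_{i-2j}a^{(n)}_j$. *)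

From Stdlib Require Import Reals Lra Lia ZArith List Classical ClassicalEpsilon.
From Stdlib Require Fin.
Open Scope R_scope.

Definition is_metric {X : Type} (d : X -> X -> R) : Prop :=
  (forall x y, 0 <= d x y) /\
  (forall x y, d x y = 0 <-> x = y) /\
  (forall x y, d x y = d y x) /\
  (forall x y z, d x z <= d x y + d y z).

Definition cauchy_seq {X : Type} (d : X -> X -> R) (u : nat -> X) : Prop :=
  forall eps, 0 < eps -> exists N, forall m n, (N <= m)%nat -> (N <= n)%nat ->
    d (u m) (u n) < eps.

Definition converges_to {X : Type} (d : X -> X -> R) (u : nat -> X) (l : X) : Prop :=
  forall eps, 0 < eps -> exists N, forall n, (N <= n)%nat -> d (u n) l < eps.

Definition complete {X : Type} (d : X -> X -> R) : Prop :=
  forall u : nat -> X, cauchy_seq d u -> exists l, converges_to d u l.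

Definition hadamard {X : Type} (d : X -> X -> R) : Prop :=
  is_metric d /\ complete d /\
  forall x0 x1 : X, exists y : X, forall z : X,
    (d z y)^2 <= /2 * (d z x0)^2 + /2 * (d z x1)^2 - /4 * (d x0 x1)^2.

Definition Zs (s : nat) : Type := Fin.t s -> Z.
Definition zs_sub {s} (i j : Zs s) : Zs s := fun t => (i t - j t)%Z.
Definition zs_scal {s} (c : Z) (j : Zs s) : Zs s := fun t => (c * j t)%Z.
Definition zs_zero {s} : Zs s := fun _ => 0%Z.

(** Sum over Z^s of a finitely supported real function: the sum over any
    duplicate-free list containing the support (well defined); 0 if the
    function is not finitely supported (never used in that case). *)
Definition zsum {s} (f : Zs s -> R) : R :=
  match excluded_middle_informative
          (exists L : list (Zs s), NoDup L /\ forall k, f k <> 0 -> In k L) with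
  | left H => fold_right Rplus 0 (map f (proj1_sig (constructive_indefinite_description _ H)))
  | right _ => 0
  end.

Definition is_mask {s} (a : Zs s -> R) : Prop :=
  (exists L : list (Zs s), forall k, a k <> 0 -> In k L) /\
  (forall k, 0 <= a k) /\
  (forall i, zsum (fun j => a (zs_sub i (zs_scal 2%Z j))) = 1).

(** Barycentric scheme: (S x)_i = argmin_y sum_j a_{i-2j} d(x_j,y)^2
    (a minimizer chosen by Hilbert's epsilon; it exists and is unique in a
    Hadamard space). *)
Definition bary_scheme {X : Type} (d : X -> X -> R) {s} (a : Zs s -> R)
    (x : Zs s -> X) : Zs s -> X :=
  fun i => epsilon (inhabits (x i))
    (fun y => forall y', zsum (fun j => a (zs_sub i (zs_scal 2%Z j)) * (d (x j) y)^2)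
                       <= zsum (fun j => a (zs_sub i (zs_scal 2%Z j)) * (d (x j) y')^2)).

Fixpoint mask_pow {s} (a : Zs s -> R) (n : nat) : Zs s -> R :=
  match n with
  | O => fun i => if excluded_middle_informative (i = zs_zero) then 1 else 0
  | S m => fun i => zsum (fun j => a (zs_sub i (zs_scal 2%Z j)) * mask_pow a m j)
  end.

Definition bounded_seq {X : Type} (d : X -> X -> R) {s} (x : Zs s -> X) : Prop :=
  exists M, forall k l, d (x k) (x l) <= M.

(** Fix a family of points p_j with finitely supported nonnegative
    weights w_j summing to 1.  Its Frechet functional F(y) = sum_j w_j d(p_j,y)^2
    is nonnegative, lower semicontinuous and midpoint convex with modulus
    d^2/4; in a complete space it therefore has a minimizer b (the barycenter,
    limit of a minimizing sequence), and repeated halving of [b,z] gives the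
    variance inequality d(b,z)^2 <= F z - F b.  Comparing with the pointwise
    bound d(p,z)^2 - d(p,b)^2 <= 2 d(b,z) d(p,z) - d(b,z)^2 yields Jensen's
    inequality d(b,z) <= sum_j w_j d(p_j,z).  Applied with w_j = a_{i-2j} this
    bounds one step of the barycentric scheme.  An induction on n, exchanging
    the two lattice sums and using the refinement relation of the iterated
    masks a^(n), gives the first claim; applying it at both ends gives the
    second. *)
From Stdlib Require Import Reals Lra Lia ZArith List Classical ClassicalEpsilon
  FunctionalExtensionality Permutation.
Open Scope R_scope.

Definition lsum {A : Type} (f : A -> R) (L : list A) : R := fold_right Rplus 0 (map f L).

Section ListSums.
Context {A : Type}.

Lemma lsum_add (f g : A -> R) (L : list A) :
  lsum (fun k => f k + g k) L = lsum f L + lsum g L.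
Proof. induction L as [|a L IH]; unfold lsum in *; simpl; [lra | rewrite IH; lra]. Qed.

Lemma lsum_scal (c : R) (f : A -> R) (L : list A) :
  lsum (fun k => c * f k) L = c * lsum f L.
Proof. induction L as [|a L IH]; unfold lsum in *; simpl; [lra | rewrite IH; lra]. Qed.

Lemma lsum_le (f g : A -> R) (L : list A) :
  (forall k, f k <= g k) -> lsum f L <= lsum g L.
Proof.
  intro Hfg; induction L as [|a L IH]; unfold lsum in *; simpl; [lra|].
  specialize (Hfg a); lra.
Qed.

Lemma lsum_nonneg (f : A -> R) (L : list A) : (forall k, 0 <= f k) -> 0 <= lsum f L.
Proof.
  intro Hf; induction L as [|a L IH]; unfold lsum in *; simpl; [lra|].
  specialize (Hf a); lra.
Qed.

Lemma lsum_vanish (f : A -> R) (L : list A) : (forall k, In k L -> f k = 0) -> lsum f L = 0.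
Proof.
  intro Hf; induction L as [|a L IH]; unfold lsum in *; simpl; [lra|].
  rewrite Hf by (left; reflexivity).
  rewrite IH by (intros k Hk; apply Hf; right; exact Hk); lra.
Qed.

Lemma lsum_map {B : Type} (f : B -> R) (g : A -> B) (L : list A) :
  lsum f (map g L) = lsum (fun k => f (g k)) L.
Proof. unfold lsum; rewrite map_map; reflexivity. Qed.

Lemma lsum_perm (f : A -> R) (L L' : list A) : Permutation L L' -> lsum f L = lsum f L'.
Proof. induction 1; unfold lsum in *; simpl; lra. Qed.

Lemma lsum_filter_nonzero (f : A -> R) (L : list A) :
  lsum f L = lsum f (filter (fun k => if Req_EM_T (f k) 0 then false else true) L).
Proof.
  induction L as [|a L IH]; [reflexivity|]; simpl.
  destruct (Req_EM_T (f a) 0) as [E|E]; unfold lsum in *; simpl; rewrite IH; [rewrite E|]; lra.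
Qed.

Lemma lsum_support_indep (f : A -> R) (L1 L2 : list A) :
  NoDup L1 -> NoDup L2 ->
  (forall k, f k <> 0 -> In k L1) -> (forall k, f k <> 0 -> In k L2) ->
  lsum f L1 = lsum f L2.
Proof.
  intros N1 N2 H1 H2; rewrite (lsum_filter_nonzero f L1), (lsum_filter_nonzero f L2).
  apply lsum_perm, NoDup_Permutation; try apply NoDup_filter; auto.
  intro k; rewrite !filter_In; destruct (Req_EM_T (f k) 0);
    split; intros [_ Hb]; try discriminate; split; auto.
Qed.

End ListSums.

Lemma lsum_swap {A B : Type} (G : A -> B -> R) (La : list A) (Lb : list B) :
  lsum (fun j => lsum (G j) Lb) La = lsum (fun k => lsum (fun j => G j k) La) Lb.
Proof.
  induction La as [|a La IH].
  - symmetry; apply (lsum_vanish (fun k : B => lsum (fun j : A => G j k) nil)); reflexivity.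
  - unfold lsum at 1; simpl; fold (lsum (fun j => lsum (G j) Lb) La).
    rewrite IH, <- lsum_add; reflexivity.
Qed.


Definition supp_in {s} (f : Zs s -> R) (L : list (Zs s)) : Prop :=
  forall k, f k <> 0 -> In k L.

Definition fin_supp {s} (f : Zs s -> R) : Prop := exists L, supp_in f L.

Definition zdedup {s} (L : list (Zs s)) : list (Zs s) :=
  nodup (fun u v => excluded_middle_informative (u = v)) L.

Section LatticeSums.
Context {s : nat}.
Implicit Types (f g : Zs s -> R) (L : list (Zs s)).

Lemma zsum_nodup_list f L : NoDup L -> supp_in f L -> zsum f = lsum f L.
Proof.
  intros HL Hf; unfold zsum; destruct excluded_middle_informative as [E|E].
  - destruct (constructive_indefinite_description _ E) as [L0 [N0 H0]]; simpl.
    apply (lsum_support_indep f L0 L); auto.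
  - exfalso; apply E; exists L; auto.
Qed.

Lemma zsum_lsum f L : supp_in f L -> zsum f = lsum f (zdedup L).
Proof.
  intro Hf; apply zsum_nodup_list; [apply NoDup_nodup|].
  intros k Hk; apply nodup_In; auto.
Qed.

Lemma supp_in_app_l f L L' : supp_in f L -> supp_in f (L ++ L').
Proof. intros Hf k Hk; apply in_or_app; left; auto. Qed.

Lemma supp_in_app_r f L L' : supp_in f L' -> supp_in f (L ++ L').
Proof. intros Hf k Hk; apply in_or_app; right; auto. Qed.

Lemma supp_in_mull f g L : supp_in f L -> supp_in (fun k => f k * g k) L.
Proof. intros Hf k Hk; apply Hf; intro E; apply Hk; rewrite E; ring. Qed.

Lemma supp_in_mulr f g L : supp_in g L -> supp_in (fun k => f k * g k) L.
Proof. intros Hg k Hk; apply Hg; intro E; apply Hk; rewrite E; ring. Qed.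

Lemma fin_supp_mull f g : fin_supp f -> fin_supp (fun k => f k * g k).
Proof. intros [L Hf]; exists L; apply supp_in_mull; auto. Qed.

Lemma fin_supp_mulr f g : fin_supp g -> fin_supp (fun k => f k * g k).
Proof. intros [L Hg]; exists L; apply supp_in_mulr; auto. Qed.

Lemma fin_supp_add f g : fin_supp f -> fin_supp g -> fin_supp (fun k => f k + g k).
Proof.
  intros [Lf Hf] [Lg Hg]; exists (Lf ++ Lg); intros k Hk; apply in_or_app.
  destruct (Req_EM_T (f k) 0) as [E|E]; [right; apply Hg; rewrite E in Hk; lra | left; auto].
Qed.

Lemma zsum_ext f g : (forall k, f k = g k) -> zsum f = zsum g.
Proof. intro H; replace g with f; auto; apply functional_extensionality; auto. Qed.

Lemma zsum_zero f : (forall k, f k = 0) -> zsum f = 0.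
Proof. intro H; rewrite (zsum_lsum f nil); [reflexivity|]. intros k Hk; exfalso; apply Hk, H. Qed.

Lemma zsum_nonneg f : (forall k, 0 <= f k) -> 0 <= zsum f.
Proof.
  intro H; unfold zsum; destruct excluded_middle_informative; [|lra].
  apply lsum_nonneg; auto.
Qed.

Lemma zsum_add f g : fin_supp f -> fin_supp g ->
  zsum (fun k => f k + g k) = zsum f + zsum g.
Proof.
  intros Hf Hg; destruct (fin_supp_add f g Hf Hg) as [L Hfg].
  destruct Hf as [Lf Hf], Hg as [Lg Hg].
  rewrite !(zsum_lsum _ (L ++ Lf ++ Lg)), lsum_add;
    eauto using supp_in_app_l, supp_in_app_r.
Qed.

Lemma zsum_scal (c : R) g : fin_supp g -> zsum (fun k => c * g k) = c * zsum g.
Proof.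
  intros [L Hg]; rewrite !(zsum_lsum _ L), lsum_scal; auto.
  apply supp_in_mulr; auto.
Qed.

Lemma zsum_le f g : fin_supp f -> fin_supp g -> (forall k, f k <= g k) -> zsum f <= zsum g.
Proof.
  intros [Lf Hf] [Lg Hg] H.
  rewrite !(zsum_lsum _ (Lf ++ Lg)); auto using supp_in_app_l, supp_in_app_r.
  apply lsum_le; auto.
Qed.

Lemma zsum_fubini (G : Zs s -> Zs s -> R) (Lj : list (Zs s)) (Lk : Zs s -> list (Zs s)) :
  (forall j k, G j k <> 0 -> In j Lj /\ In k (Lk j)) ->
  zsum (fun j => zsum (G j)) = zsum (fun k => zsum (fun j => G j k)).
Proof.
  intro HG; set (Lall := flat_map Lk Lj).
  assert (H : forall j k, G j k <> 0 -> In j Lj /\ In k Lall).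
  { intros j k Hjk; destruct (HG j k Hjk); split; auto; apply in_flat_map; eauto. }
  rewrite (zsum_ext _ (fun j => lsum (G j) (zdedup Lall)))
    by (intro j; apply zsum_lsum; intros k Hk; apply (H j k Hk)).
  rewrite (zsum_ext (fun k => zsum (fun j => G j k)) (fun k => lsum (fun j => G j k) (zdedup Lj)))
    by (intro k; apply zsum_lsum; intros j Hj; apply (H j k Hj)).
  rewrite (zsum_lsum _ Lj), (zsum_lsum _ Lall); [apply lsum_swap| |].
  - intros k Hk; apply NNPP; intro Nk; apply Hk, lsum_vanish.
    intros j _; apply NNPP; intro E; apply Nk, (H j k E).
  - intros j Hj; apply NNPP; intro Nj; apply Hj, lsum_vanish.
    intros k _; apply NNPP; intro E; apply Nj, (H j k E).
Qed.

Lemma zsum_translate g (t : Zs s) : fin_supp g -> zsum (fun j => g (zs_sub j t)) = zsum g.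
Proof.
  intros [L Hg].
  set (shift := fun (m : Zs s) (u : Zs s) => fun r => (m r + u r)%Z).
  assert (Hback : forall j, zs_sub (shift j t) t = j).
  { intro j; apply functional_extensionality; intro r; unfold zs_sub, shift; ring. }
  assert (Hfwd : forall j, shift (zs_sub j t) t = j).
  { intro j; apply functional_extensionality; intro r; unfold zs_sub, shift; ring. }
  rewrite (zsum_lsum g L) by auto.
  rewrite (zsum_nodup_list _ (map (fun m => shift m t) (zdedup L))).
  - rewrite lsum_map; f_equal; apply functional_extensionality; intro m; rewrite Hback; auto.
  - apply FinFun.Injective_map_NoDup; [|apply NoDup_nodup].
    intros u v E; rewrite <- (Hback u), <- (Hback v), E; auto.
  - intros j Hj; rewrite <- (Hfwd j); apply (in_map (fun m => shift m t)), nodup_In; auto.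
Qed.

Definition affine_preimage (L : list (Zs s)) (i : Zs s) (c : Z) : list (Zs s) :=
  map (fun m => fun r => Z.div (i r - m r) c) L.

Lemma supp_in_affine f L (i : Zs s) (c : Z) : c <> 0%Z -> supp_in f L ->
  supp_in (fun k => f (zs_sub i (zs_scal c k))) (affine_preimage L i c).
Proof.
  intros Hc Hf k Hk; apply Hf in Hk.
  replace k with ((fun m : Zs s => fun r => Z.div (i r - m r) c) (zs_sub i (zs_scal c k)))
    by (apply functional_extensionality; intro r; unfold zs_sub, zs_scal;
        replace (i r - (i r - c * k r))%Z with (k r * c)%Z by ring; apply Z.div_mul; auto).
  apply (in_map (fun m : Zs s => fun r => Z.div (i r - m r) c)); auto.
Qed.

Lemma fin_supp_affine f (i : Zs s) (c : Z) : c <> 0%Z -> fin_supp f ->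
  fin_supp (fun k => f (zs_sub i (zs_scal c k))).
Proof. intros Hc [L Hf]; eexists; apply supp_in_affine; eauto. Qed.

End LatticeSums.

Lemma le_of_geometric_slack (A B C : R) : (forall N, A <= B + (/ 2) ^ N * C) -> A <= B.
Proof.
  intro H; apply Rnot_lt_le; intro HBA.
  destruct (pow_lt_1_zero (/ 2) ltac:(rewrite Rabs_pos_eq; lra) ((A - B) / (Rabs C + 1)))
    as [N HN].
  { apply Rdiv_lt_0_compat; [lra | pose proof (Rabs_pos C); lra]. }
  specialize (HN N (le_n N)); specialize (H N).
  pose proof (pow_le (/ 2) N ltac:(lra)) as Hq.
  rewrite Rabs_pos_eq in HN by exact Hq.
  assert (HC : (/ 2) ^ N * C <= (/ 2) ^ N * Rabs C)
    by (apply Rmult_le_compat_l; [exact Hq | apply Rle_abs]).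
  assert (Hq' : (/ 2) ^ N * (Rabs C + 1) < A - B).
  { apply (Rmult_lt_compat_r (Rabs C + 1)) in HN; [|pose proof (Rabs_pos C); lra].
    unfold Rdiv in HN; rewrite Rmult_assoc, Rinv_l in HN by (pose proof (Rabs_pos C); lra).
    lra. }
  nra.
Qed.

Lemma infimum_exists {X : Type} (F : X -> R) (x0 : X) : (forall y, 0 <= F y) ->
  exists mu, (forall y, mu <= F y) /\ (forall e, 0 < e -> exists y, F y < mu + e).
Proof.
  intro Hnn.
  destruct (completeness (fun r => exists y, r = - F y)) as [mm [Hub Hlub]].
  - exists 0; intros r [y ->]; specialize (Hnn y); lra.
  - exists (- F x0), x0; reflexivity.
  - exists (- mm); split.
    + intro y; specialize (Hub (- F y) (ex_intro _ y eq_refl)); lra.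
    + intros e He; apply NNPP; intro Hno.
      assert (Hbound : is_upper_bound (fun r => exists y, r = - F y) (mm - e)).
      { intros r [y ->]; apply Rnot_lt_le; intro Hlt; apply Hno; exists y; lra. }
      specialize (Hlub _ Hbound); lra.
Qed.

Section HadamardGeometry.
Context {X : Type} (d : X -> X -> R).

Definition is_midpoint (u v m : X) : Prop :=
  forall z, d z m ^ 2 <= / 2 * d z u ^ 2 + / 2 * d z v ^ 2 - / 4 * d u v ^ 2.

Definition midpoint_convex (F : X -> R) : Prop :=
  forall u v m, is_midpoint u v m -> F m <= / 2 * F u + / 2 * F v - / 4 * d u v ^ 2.

Definition lower_semicontinuous (F : X -> R) : Prop :=
  forall l e, 0 < e -> exists del, 0 < del /\ forall y, d y l < del -> F l <= F y + e.

Hypothesis Hd : hadamard d.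

Let d_nonneg : forall x y, 0 <= d x y.
Proof. destruct Hd as [[H _] _]; exact H. Qed.
Let d_refl : forall x, d x x = 0.
Proof. destruct Hd as [[_ [H _]] _]; intro x; apply H; reflexivity. Qed.
Let d_sym : forall x y, d x y = d y x.
Proof. destruct Hd as [[_ [_ [H _]]] _]; exact H. Qed.
Let d_tri : forall x y z, d x z <= d x y + d y z.
Proof. destruct Hd as [[_ [_ [_ H]]] _]; exact H. Qed.
Let midpoint_exists : forall u v, exists m, is_midpoint u v m.
Proof. destruct Hd as [_ [_ H]]; exact H. Qed.

Lemma minimizing_seq_cauchy (F : X -> R) (mu : R) (ys : nat -> X) :
  midpoint_convex F -> (forall y, mu <= F y) -> (forall n, F (ys n) < mu + / INR (S n)) ->
  cauchy_seq d ys.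
Proof.
  intros HF Hmu Hys e He.
  destruct (archimed_cor1 (e * e / 4)) as [N [HN HNpos]]; [nra|].
  exists N; intros n k Hn Hk.
  destruct (midpoint_exists (ys n) (ys k)) as [m Hm].
  assert (Hinv : forall j, (N <= j)%nat -> / INR (S j) <= / INR N).
  { intros j Hj; apply Rinv_le_contravar; [apply lt_0_INR; lia | apply le_INR; lia]. }
  pose proof (HF _ _ _ Hm); pose proof (Hmu m); pose proof (Hys n); pose proof (Hys k).
  pose proof (Hinv n Hn); pose proof (Hinv k Hk); pose proof (d_nonneg (ys n) (ys k)).
  assert (d (ys n) (ys k) ^ 2 < e * e) by lra.
  nra.
Qed.

(** In a Hadamard space a nonnegative, midpoint-convex, lower semicontinuous
    function attains its infimum (the limit of a minimizing sequence). *)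
Lemma minimizer_exists (F : X -> R) (x0 : X) :
  (forall y, 0 <= F y) -> midpoint_convex F -> lower_semicontinuous F ->
  exists b, forall y, F b <= F y.
Proof.
  intros Hnn HF Hlsc.
  destruct (infimum_exists F x0 Hnn) as [mu [Hmu Happ]].
  assert (Hseq : forall n, exists y, F y < mu + / INR (S n))
    by (intro n; apply Happ, Rinv_0_lt_compat, lt_0_INR; lia).
  destruct (choice _ Hseq) as [ys Hys].
  destruct Hd as [_ [Hcomplete _]].
  destruct (Hcomplete ys (minimizing_seq_cauchy F mu ys HF Hmu Hys)) as [l Hl].
  exists l; intro y; apply Rle_trans with mu; [|apply Hmu].
  apply Rnot_lt_le; intro Hgap; set (e := (F l - mu) / 2).
  destruct (Hlsc l e) as [del [Hdel Hnear]]; [unfold e; lra|].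
  destruct (Hl del Hdel) as [N1 HN1].
  destruct (archimed_cor1 e) as [N2 [HN2 HN2pos]]; [unfold e; lra|].
  set (n := Nat.max N1 N2).
  assert (Hinv : / INR (S n) <= / INR N2)
    by (apply Rinv_le_contravar; [apply lt_0_INR; lia | apply le_INR; lia]).
  pose proof (Hnear (ys n) (HN1 n (Nat.le_max_l _ _))); pose proof (Hys n).
  unfold e in *; lra.
Qed.

(** Variance inequality: a minimizer b of a midpoint-convex F satisfies
    d(b,z)^2 <= F z - F b.  Halving the segment [b,z] repeatedly gives the
    bound up to an error 2^-N d(b,z)^2. *)
Lemma variance_inequality (F : X -> R) (b : X) :
  midpoint_convex F -> (forall y, F b <= F y) -> forall z, d b z ^ 2 <= F z - F b.
Proof.
  intros HF Hb z.
  apply (le_of_geometric_slack _ _ (d b z ^ 2)).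
  intro N; revert z; induction N as [|N IH]; intro z.
  - specialize (Hb z); simpl; lra.
  - destruct (midpoint_exists b z) as [m Hm].
    assert (Hzm : d z m <= d b z / 2).
    { pose proof (Hm z) as Hmz; rewrite d_refl, (d_sym z b) in Hmz.
      pose proof (d_nonneg z m); pose proof (d_nonneg b z); nra. }
    assert (Hbm : d b z / 2 <= d b m) by (pose proof (d_tri b m z); rewrite (d_sym m z) in *; lra).
    assert (Hq : 0 <= (/ 2) ^ N <= 1).
    { clear. induction N as [|N IH]; simpl; lra. }
    pose proof (IH m); pose proof (HF b z m Hm); pose proof (d_nonneg b z).
    assert (d b z / 2 * (d b z / 2) <= d b m * d b m) by (apply Rmult_le_compat; lra).
    simpl in *; nra.
Qed.


Section FrechetFunctional.
Context {s : nat} (w : Zs s -> R) (p : Zs s -> X).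
Hypotheses (w_fin : fin_supp w) (w_nonneg : forall j, 0 <= w j) (w_total : zsum w = 1).

(** The Frechet functional of the weighted family (p_j, w_j); its minimizers
    are the barycenters. *)
Definition frechet (y : X) : R := zsum (fun j => w j * d (p j) y ^ 2).

Lemma wmean_le (g h : Zs s -> R) : (forall j, g j <= h j) ->
  zsum (fun j => w j * g j) <= zsum (fun j => w j * h j).
Proof.
  intro H; apply zsum_le; try apply fin_supp_mull; auto.
  intro j; apply Rmult_le_compat_l; auto.
Qed.

Lemma wmean_affine (al be ga : R) (g h : Zs s -> R) :
  zsum (fun j => w j * (al * g j + be * h j + ga))
  = al * zsum (fun j => w j * g j) + be * zsum (fun j => w j * h j) + ga.
Proof.
  rewrite (zsum_ext _ (fun j => al * (w j * g j) + (be * (w j * h j) + ga * w j)))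
    by (intro; ring).
  rewrite !zsum_add, !zsum_scal, w_total;
    eauto using fin_supp_add, fin_supp_mull, fin_supp_mulr; ring.
Qed.

Lemma frechet_nonneg (y : X) : 0 <= frechet y.
Proof. apply zsum_nonneg; intro j; apply Rmult_le_pos; [auto | apply pow2_ge_0]. Qed.

Lemma frechet_midpoint_convex : midpoint_convex frechet.
Proof.
  intros u v m Hm; unfold frechet.
  eapply Rle_trans.
  - apply (wmean_le _ (fun j => / 2 * d (p j) u ^ 2 + / 2 * d (p j) v ^ 2 + - / 4 * d u v ^ 2)).
    intro j; specialize (Hm (p j)); lra.
  - rewrite (wmean_affine (/ 2) (/ 2) _ (fun j => d (p j) u ^ 2) (fun j => d (p j) v ^ 2)).
    lra.
Qed.

(** Moving the argument by del raises each d(p_j,.)^2 by at most 2 del d(p_j,l). *)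
Lemma frechet_lsc : lower_semicontinuous frechet.
Proof.
  intros l e He.
  set (C := zsum (fun j => w j * d (p j) l)).
  assert (HC : 0 <= C)
    by (apply zsum_nonneg; intro j; apply Rmult_le_pos; auto).
  exists (e / (2 * C + 1)); split; [apply Rdiv_lt_0_compat; lra|].
  intros y Hy.
  assert (Hstep : frechet l <= frechet y + 2 * d y l * C).
  { unfold frechet, C.
    rewrite <- (Rplus_0_r (_ + 2 * d y l * _)), <- (Rmult_1_l (zsum (fun j => w j * d (p j) y ^ 2))).
    rewrite <- (wmean_affine 1 (2 * d y l) 0 (fun j => d (p j) y ^ 2) (fun j => d (p j) l)).
    apply wmean_le; intro j.
    pose proof (d_tri (p j) y l); pose proof (d_nonneg (p j) y); pose proof (d_nonneg (p j) l).
    pose proof (d_nonneg y l); destruct (Rle_lt_dec (d y l) (d (p j) l)); nra. }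
  assert (2 * d y l * C <= e).
  { apply Rlt_le in Hy; apply (Rmult_le_compat_r (2 * C + 1)) in Hy; [|lra].
    unfold Rdiv in Hy; rewrite Rmult_assoc, Rinv_l in Hy by lra.
    pose proof (d_nonneg y l); nra. }
  lra.
Qed.

Lemma frechet_jensen (b : X) : (forall y, frechet b <= frechet y) ->
  forall z, d b z <= zsum (fun j => w j * d (p j) z).
Proof.
  intros Hb z.
  set (G := zsum (fun j => w j * d (p j) z)).
  pose proof (variance_inequality frechet b frechet_midpoint_convex Hb z) as Hvar.
  assert (Hupper : frechet z <= frechet b + 2 * d b z * G - d b z ^ 2).
  { unfold frechet, G, Rminus.
    rewrite <- (Rmult_1_l (zsum (fun j => w j * d (p j) b ^ 2))).
    rewrite <- (wmean_affine 1 (2 * d b z) (- d b z ^ 2)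
                  (fun j => d (p j) b ^ 2) (fun j => d (p j) z)).
    apply wmean_le; intro j.
    pose proof (d_tri (p j) b z); pose proof (d_tri b (p j) z); pose proof (d_sym b (p j)).
    pose proof (d_nonneg (p j) b); nra. }
  assert (HG : 0 <= G) by (apply zsum_nonneg; intro j; apply Rmult_le_pos; auto).
  pose proof (d_nonneg b z); nra.
Qed.

End FrechetFunctional.

End HadamardGeometry.

(** One step of the barycentric scheme obeys Jensen's inequality: (Sy)_i is the
    barycenter of the y_j with weights a_{i-2j}. *)
Lemma bary_scheme_jensen {X : Type} (d : X -> X -> R) {s : nat} (a : Zs s -> R)
    (y : Zs s -> X) (i : Zs s) (z : X) :
  hadamard d -> is_mask a ->
  d (bary_scheme d a y i) z <= zsum (fun j => a (zs_sub i (zs_scal 2 j)) * d (y j) z).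
Proof.
  intros Hd [a_fin [a_nonneg a_sum]].
  set (w := fun j => a (zs_sub i (zs_scal 2 j))).
  assert (w_fin : fin_supp w) by (apply fin_supp_affine; [lia | exact a_fin]).
  apply (frechet_jensen d Hd w y w_fin (fun j => a_nonneg _) (a_sum i)).
  unfold bary_scheme; apply epsilon_spec.
  apply (minimizer_exists d Hd _ (y i)).
  - apply (frechet_nonneg d w y (fun j => a_nonneg _)).
  - apply (frechet_midpoint_convex d w y w_fin (fun j => a_nonneg _) (a_sum i)).
  - apply (frechet_lsc d Hd w y w_fin (fun j => a_nonneg _) (a_sum i)).
Qed.

Section MaskPowers.
Context {s : nat} (a : Zs s -> R).
Hypotheses (a_fin : fin_supp a) (a_nonneg : forall k, 0 <= a k).

Lemma mask_pow_nonneg (n : nat) (k : Zs s) : 0 <= mask_pow a n k.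
Proof.
  revert k; induction n as [|n IH]; intro k; simpl.
  - destruct excluded_middle_informative; lra.
  - apply zsum_nonneg; intro j; apply Rmult_le_pos; auto.
Qed.

(** The iterated masks are finitely supported: a^(n+1) lives in
    {k + 2 j : a_k <> 0, a^(n)_j <> 0}. *)
Lemma mask_pow_fin_supp (n : nat) : fin_supp (mask_pow a n).
Proof.
  destruct a_fin as [La HLa].
  induction n as [|n [Ln HLn]].
  - exists (zs_zero :: nil); intros k Hk; simpl in Hk.
    destruct excluded_middle_informative as [E|E]; [left; auto | lra].
  - exists (flat_map (fun j => map (fun k => fun t => (k t + 2 * j t)%Z) La) Ln).
    intros i Hi; apply NNPP; intro Nin; apply Hi; simpl; apply zsum_zero; intro j.
    apply NNPP; intro Hne; apply Nin, in_flat_map; exists j; split.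
    + apply HLn; intro E; apply Hne; rewrite E; ring.
    + assert (Hai : a (zs_sub i (zs_scal 2 j)) <> 0) by (intro E; apply Hne; rewrite E; ring).
      apply HLa in Hai.
      replace i with ((fun k : Zs s => fun t => (k t + 2 * j t)%Z) (zs_sub i (zs_scal 2 j)))
        by (apply functional_extensionality; intro t; unfold zs_sub, zs_scal; ring).
      apply (in_map (fun k : Zs s => fun t => (k t + 2 * j t)%Z)); auto.
Qed.

Lemma mask_pow_succ_shift (n : nat) (c : Z) (i k : Zs s) :
  mask_pow a (S n) (zs_sub i (zs_scal (2 * c) k))
  = zsum (fun j => a (zs_sub i (zs_scal 2 j)) * mask_pow a n (zs_sub j (zs_scal c k))).
Proof.
  cbn [mask_pow].
  rewrite <- (zsum_translate _ (zs_scal c k)) by (apply fin_supp_mulr, mask_pow_fin_supp).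
  apply zsum_ext; intro j; f_equal; f_equal.
  apply functional_extensionality; intro t; unfold zs_sub, zs_scal; ring.
Qed.

End MaskPowers.

(** a^(0) is the Kronecker delta, so summing against it evaluates at i. *)
Lemma mask_pow_zero_sum {s : nat} (a : Zs s -> R) (f : Zs s -> R) (i : Zs s) :
  zsum (fun k => mask_pow a 0 (zs_sub i (zs_scal (2 ^ Z.of_nat 0) k)) * f k) = f i.
Proof.
  change (2 ^ Z.of_nat 0)%Z with 1%Z.
  assert (Hdelta : forall k, zs_sub i (zs_scal 1 k) = zs_zero <-> k = i).
  { intro k; split; intro E.
    - apply functional_extensionality; intro t.
      apply (f_equal (fun u => u t)) in E; unfold zs_sub, zs_scal, zs_zero in E; lia.
    - subst k; apply functional_extensionality; intro t; unfold zs_sub, zs_scal, zs_zero; lia. }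
  rewrite (zsum_nodup_list _ (i :: nil)).
  - unfold lsum; simpl; destruct excluded_middle_informative as [E|E]; [lra|].
    exfalso; apply E, Hdelta; reflexivity.
  - constructor; [intros [] | constructor].
  - intros k Hk; simpl in Hk; destruct excluded_middle_informative as [E|E].
    + left; symmetry; apply Hdelta; exact E.
    + exfalso; apply Hk; ring.
Qed.

Lemma pow2_Z_nonzero (n : nat) : (2 ^ Z.of_nat n <> 0)%Z.
Proof. pose proof (Z.pow_pos_nonneg 2 (Z.of_nat n)); lia. Qed.

Section JensenIteration.
Context {X : Type} (d : X -> X -> R) {s : nat} (a : Zs s -> R)
  (T : (Zs s -> X) -> Zs s -> X) (x : Zs s -> X).
Hypotheses (a_fin : fin_supp a) (a_nonneg : forall k, 0 <= a k).

Hypothesis T_jensen :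
  forall y i z, d (T y i) z <= zsum (fun j => a (zs_sub i (zs_scal 2 j)) * d (y j) z).

Lemma iterate_distance_bound (n : nat) (i : Zs s) (z : X) :
  d (Nat.iter n T x i) z
  <= zsum (fun k => mask_pow a n (zs_sub i (zs_scal (2 ^ Z.of_nat n) k)) * d (x k) z).
Proof.
  revert i z; induction n as [|n IH]; intros i z.
  - rewrite mask_pow_zero_sum; apply Rle_refl.
  - rewrite Nat.iter_succ.
    set (c := (2 ^ Z.of_nat n)%Z).
    assert (Hc : (2 ^ Z.of_nat (S n) = 2 * c)%Z)
      by (unfold c; rewrite Nat2Z.inj_succ, Z.pow_succ_r; lia).
    set (w := fun j => a (zs_sub i (zs_scal 2 j))).
    set (A := fun j k => mask_pow a n (zs_sub j (zs_scal c k))).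
    destruct a_fin as [La HLa].
    destruct (mask_pow_fin_supp a a_fin n) as [Ln HLn].
    assert (HLw : supp_in w (affine_preimage La i 2)) by (apply supp_in_affine; [lia | auto]).
    assert (HLA : forall j, supp_in (A j) (affine_preimage Ln j c))
      by (intro j; apply supp_in_affine; [apply pow2_Z_nonzero | auto]).
    (* one Jensen step, then the induction hypothesis inside the average *)
    apply Rle_trans with (zsum (fun j => w j * zsum (fun k => A j k * d (x k) z))).
    { eapply Rle_trans; [apply T_jensen|].
      apply zsum_le; try (eexists; apply supp_in_mull; eauto).
      intro j; apply Rmult_le_compat_l; [apply a_nonneg | apply IH]. }
    (* exchange the two sums and recognise a^(n+1) *)
    rewrite (zsum_ext _ (fun j => zsum (fun k => w j * (A j k * d (x k) z))))
      by (intro j; rewrite zsum_scal; [reflexivity | eexists; apply supp_in_mull, HLA]).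
    rewrite (zsum_fubini _ (affine_preimage La i 2) (fun j => affine_preimage Ln j c)).
    2: { intros j k Hjk; split; [apply HLw | apply (HLA j)];
         intro E; apply Hjk; rewrite E; ring. }
    apply Req_le, zsum_ext; intro k.
    rewrite Hc, mask_pow_succ_shift by auto.
    rewrite (zsum_ext _ (fun j => d (x k) z * (w j * A j k))) by (intro; ring).
    rewrite zsum_scal by (eexists; apply supp_in_mull; eauto).
    apply Rmult_comm.
Qed.

Hypothesis d_sym : forall u v, d u v = d v u.

(** Applying the bound at both ends yields the two-point estimate. *)
Lemma iterate_pair_bound (n : nat) (i j : Zs s) :
  d (Nat.iter n T x i) (Nat.iter n T x j)
  <= zsum (fun k => zsum (fun l =>
       mask_pow a n (zs_sub i (zs_scal (2 ^ Z.of_nat n) k))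
       * mask_pow a n (zs_sub j (zs_scal (2 ^ Z.of_nat n) l))
       * d (x k) (x l))).
Proof.
  set (c := (2 ^ Z.of_nat n)%Z).
  set (A := fun i k => mask_pow a n (zs_sub i (zs_scal c k))).
  assert (HA : forall i, fin_supp (A i))
    by (intro; apply fin_supp_affine; [apply pow2_Z_nonzero | apply mask_pow_fin_supp; auto]).
  eapply Rle_trans; [apply iterate_distance_bound|].
  apply Rle_trans with (zsum (fun k => A i k * zsum (fun l => A j l * d (x k) (x l)))).
  - apply zsum_le; [apply fin_supp_mull, (HA i) .. |].
    intro k; apply Rmult_le_compat_l; [apply mask_pow_nonneg; auto|].
    rewrite d_sym; eapply Rle_trans; [apply iterate_distance_bound|].
    apply Req_le, zsum_ext; intro l; rewrite d_sym; reflexivity.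
  - apply Req_le, zsum_ext; intro k.
    rewrite <- zsum_scal by (apply fin_supp_mull; auto).
    apply zsum_ext; intro l; unfold A; ring.
Qed.

End JensenIteration.

Theorem mainTheorem3 (X : Type) (d : X -> X -> R) (s : nat) (a : Zs s -> R)
  (x : Zs s -> X) :
  hadamard d -> is_mask a -> bounded_seq d x ->
  forall n : nat,
    (forall (i : Zs s) (z : X),
       d (Nat.iter n (bary_scheme d a) x i) z
       <= zsum (fun k => mask_pow a n (zs_sub i (zs_scal (2 ^ Z.of_nat n)%Z k)) * d (x k) z)) /\
    (forall i j : Zs s,
       d (Nat.iter n (bary_scheme d a) x i) (Nat.iter n (bary_scheme d a) x j)
       <= zsum (fun k => zsum (fun l =>
            mask_pow a n (zs_sub i (zs_scal (2 ^ Z.of_nat n)%Z k))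
            * mask_pow a n (zs_sub j (zs_scal (2 ^ Z.of_nat n)%Z l))
            * d (x k) (x l)))).
Proof.
  intros Hd Ha _ n.
  pose proof Ha as [a_fin [a_nonneg _]].
  pose proof Hd as [[_ [_ [d_sym _]]] _].
  pose proof (fun y i z => bary_scheme_jensen d a y i z Hd Ha) as S_jensen.
  split.
  - intros i z; apply (iterate_distance_bound d a _ x a_fin a_nonneg S_jensen).
  - intros i j; apply (iterate_pair_bound d a _ x a_fin a_nonneg S_jensen d_sym).
Qed.
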